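(* Let $\mathcal H$ be a 1-constituent CCRN of order two, and let $A$ be a MAS of $\mathcal H$ with exactly two reactions. Then there is no other MAS of $\mathcal H$ (with a different reaction set) having the same FWMC partition as $A$.
   Context: A chemical reaction network (CRN) consists of a finite species set $\mathcal S$ and a finite set $\mathcal R$ of reactions $r^-\to r^+$ with $r^-\ne r^+\in\mathbb Z_{\ge0}^{\mathcal S}$; input/output matrices $\mathbb S^-,\mathbb S^+$ have columns $r^-,r^+$, and $\mathbb S=\mathbb S^+-\mathbb S^-$. $(\mathbb A)_M^N$ denotes the submatrix with rows in $M$ and columns in $N$; $\mathbf v\gg\mathbf0$ means all entries $>0$, and $\mathbf v>\mathbf0$ means all entries $\ge0$ and $\mathbf v\ne\mathbf0$. A 1-constituent CCRN of order two is a CRN whose species are clusters $\bar 1,\bar2,\dots,\bar L$ (cluster $\bar n$ has size $n$), whose complexes are multisets of at most two clusters, and whose reactions conserve total size: for each reaction $r^-\to r^+$, $\sum_n n\,r^-_{\bar n}=\sum_n n\,r^+_{\bar n}$ (so $\mathbf x=(1,2,\dots,L)$ is a conservation law). A motif $(\mathcal M,\mathcal R')$ ($\mathcal M\subseteq\mathcal S,\mathcal R'\subseteq\mathcal R$) is exclusively autocatalytic if: (i) some $\mathbf v\gg\mathbf0$ in $\mathbb R^{\mathcal R'}$ has $(\mathbb S)_{\mathcal M}^{\mathcal R'}\mathbf v\gg\mathbf 0$; (ii) every row and (iii) every column of $(\mathbb S^-)_{\mathcal M}^{\mathcal R'}$ is semi-positive. An autocatalytic core is an exclusively autocatalytic motif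 $(A_C,\mathcal R_A)$ no proper sub-motif ($\mathcal M'\subseteq A_C$, $\mathcal R''\subseteq\mathcal R_A$) of which is exclusively autocatalytic. The minimal autocatalytic subnetwork (MAS) $A=(\mathcal S_A,\mathcal R_A)$ of a core $(A_C,\mathcal R_A)$ has reaction set $\mathcal R_A$ and species set $\mathcal S_A$ consisting of all species occurring in some input or output complex of a reaction in $\mathcal R_A$; each MAS is assumed to have a unique core. Put $\overline{\mathbb S}=(\mathbb S)_{\mathcal S_A}^{\mathcal R_A}$. FWMC partition of a MAS $A$: the quadruple (food set, waste set, non-core member set, core set), where the food set consists of the species of $\mathcal S_A$ whose row in $\overline{\mathbb S}$ has all entries $\le0$, the waste set those whose row has all entries $\ge0$, the member set those whose row has both a positive and a negative entry, the core set is $A_C$ (contained in the member set), and the non-core member set is the member set minus $A_C$. *)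

From HB Require Import structures.
From mathcomp Require Import all_boot all_order all_algebra.
From mathcomp Require Export reals.

Set Implicit Arguments.
Unset Strict Implicit.
Unset Printing Implicit Defensive.

Import Order.TTheory GRing.Theory Num.Theory.
Local Open Scope ring_scope.

(* Species of a 1-constituent CCRN: clusters; the species [i : 'I_L]
   is the cluster of size [i.+1].  A complex is a vector of
   nonnegative integers indexed by species. *)
Definition complex (L : nat) := {ffun 'I_L -> nat}.

Section CRN.
Variables (L : nat) (Rx : finType) (N : Rx -> complex L * complex L).

Definition inp (r : Rx) : complex L := (N r).1.
Definition outp (r : Rx) : complex L := (N r).2.

Definition stoich (s : 'I_L) (r : Rx) : int := (outp r s)%:Z - (inp r s)%:Z.

(* A CRN: reactions form a set (no duplicates) and r^- <> r^+. *)
Definition is_CRN : Prop := injective N /\ (forall r, inp r != outp r).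

Definition is_CCRN1_order2 : Prop :=
  is_CRN /\
  forall r : Rx,
    [/\ (\sum_(s : 'I_L) inp r s <= 2)%N,
        (\sum_(s : 'I_L) outp r s <= 2)%N &
        \sum_(s : 'I_L) (s.+1 * inp r s)%N = \sum_(s : 'I_L) (s.+1 * outp r s)%N].

Variable R : realType.

Definition excl_autocatalytic (M : {set 'I_L}) (R' : {set Rx}) : Prop :=
  [/\ M != set0,
      (exists v : Rx -> R,
          (forall r, r \in R' -> 0 < v r) /\
          (forall s, s \in M -> 0 < \sum_(r in R') (stoich s r)%:~R * v r)),
      (forall s, s \in M -> exists2 r, r \in R' & (0 < inp r s)%N) &
      (forall r, r \in R' -> exists2 s, s \in M & (0 < inp r s)%N)].

Definition autocatalytic_core (AC : {set 'I_L}) (RA : {set Rx}) : Prop :=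
  excl_autocatalytic AC RA /\
  forall (M' : {set 'I_L}) (R'' : {set Rx}),
    M' \subset AC -> R'' \subset RA -> (M', R'') != (AC, RA) ->
    ~ excl_autocatalytic M' R''.

(* A reaction set is (the reaction set of) a MAS iff it is the reaction set
   of some autocatalytic core. *)
Definition is_MAS (RA : {set Rx}) : Prop := exists AC, autocatalytic_core AC RA.

Definition has_unique_core (RA : {set Rx}) : Prop :=
  forall C1 C2, autocatalytic_core C1 RA -> autocatalytic_core C2 RA -> C1 = C2.

End CRN.

Section FWMC.
Variables (L : nat) (Rx : finType) (N : Rx -> complex L * complex L).

Definition MAS_species (RA : {set Rx}) : {set 'I_L} :=
  [set s | [exists r in RA, (0 < inp N r s)%N || (0 < outp N r s)%N]].

Definition food_set (RA : {set Rx}) : {set 'I_L} :=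
  [set s in MAS_species RA | [forall r in RA, stoich N s r <= 0]].
Definition waste_set (RA : {set Rx}) : {set 'I_L} :=
  [set s in MAS_species RA | [forall r in RA, 0 <= stoich N s r]].
Definition member_set (RA : {set Rx}) : {set 'I_L} :=
  [set s in MAS_species RA |
     [exists r in RA, 0 < stoich N s r] && [exists r in RA, stoich N s r < 0]].

Definition FWMC (RA : {set Rx}) (AC : {set 'I_L}) :=
  (food_set RA, waste_set RA, member_set RA :\: AC, AC).

End FWMC.

From HB Require Import structures.
From mathcomp Require Import all_boot all_order all_algebra.
From mathcomp Require Import reals.
From mathcomp Require Import zify.

(* In an order-two CCRN no cluster occurs on both sides of a reaction: size
   conservation would force the same number of copies of it on both sides,
   plus at most one further cluster of equal size, i.e. equal complexes.
   Using this, a two-reaction core has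
   exactly two core species s1, s2, and its reactions form a "transfer cycle"
      p : s2 + X_p -> j1 s1 + Y_p,      q : s1 + X_q -> j2 s2 + Y_q,
   with j1, j2 in {1, 2}, not both 1, and X, Y at most one non-core cluster
   each.  Outside the core, a cluster is consumed (produced) by the MAS iff it
   is food or member (waste or member), so the FWMC partition determines the
   sets of positive sizes {|X_p|, |X_q|} and {|Y_p|, |Y_q|}.  An arithmetic
   uniqueness lemma on size profiles then recovers j1, j2 and all four sizes;
   since a complex with one non-core cluster is determined by its core part
   and its total size, both reactions, hence the reaction set, are recovered. *)

Set Implicit Arguments.
Unset Strict Implicit.
Unset Printing Implicit Defensive.

Import Order.TTheory GRing.Theory Num.Theory.

Lemma big_set2 (T : Type) (idx : T) (op : Monoid.com_law idx) (I : finType)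
    (x y : I) (F : I -> T) :
  x != y -> \big[op/idx]_(i in [set x; y]) F i = op (F x) (F y).
Proof. by move=> xy; rewrite big_setU1 ?big_set1 // in_set1. Qed.

Section RestOfComplex.
Variables (L : nat) (S : {set 'I_L}).

Definition rest_count (c : complex L) : nat := \sum_(t | t \notin S) c t.
Definition rest_size (c : complex L) : nat := \sum_(t | t \notin S) t.+1 * c t.

Lemma sum_in_rest (F : 'I_L -> nat) :
  \sum_t F t = \sum_(t in S) F t + \sum_(t | t \notin S) F t.
Proof. by rewrite (bigID (mem S)). Qed.

Lemma rest_size_count0 (c : complex L) : rest_count c = 0 -> rest_size c = 0.
Proof.
move/eqP; rewrite sum_nat_eq0 => /forall_inP c0.
by rewrite /rest_size big1 // => t /c0 /eqP ->; rewrite muln0.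
Qed.

Lemma rest_at_most_one (c : complex L) : rest_count c <= 1 ->
  (forall t, t \notin S -> c t = 0) /\ rest_size c = 0
  \/ exists2 u, u \notin S &
       (forall t, t \notin S -> c t = (t == u)) /\ rest_size c = u.+1.
Proof.
move=> c1.
case: (pickP (fun u => (u \notin S) && (0 < c u))) => [u /andP[uS cu] | none].
- have countE : rest_count c = c u + \sum_(t | (t \notin S) && (t != u)) c t.
    by rewrite /rest_count (bigD1 u).
  have /eqP : \sum_(t | (t \notin S) && (t != u)) c t = 0 by lia.
  rewrite sum_nat_eq0 => /forall_inP others.
  have cE t : t \notin S -> c t = (t == u).
    move=> tS; have [->|tu] := eqVneq t u; first by lia.
    by apply/eqP/others; rewrite tS tu.
  right; exists u => //; split=> //.
  rewrite /rest_size (bigD1 u) //= cE // eqxx muln1 big1 ?addn0 // => t /andP[tS tu].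
  by rewrite cE // (negbTE tu) muln0.
- have c0 t : t \notin S -> c t = 0 by move=> tS; move: (none t); rewrite /= tS /=; lia.
  by left; split=> //; rewrite /rest_size big1 // => t /c0 ->; rewrite muln0.
Qed.

Lemma rest_entry (c : complex L) : rest_count c <= 1 ->
  forall t, t \notin S -> c t = (rest_size c == t.+1).
Proof.
move=> /rest_at_most_one [[c0 ->] | [u uS [cE ->]]] t tS; first by rewrite c0.
by rewrite cE // eqSS eq_sym.
Qed.

Lemma rest_size_spec (c : complex L) : rest_count c <= 1 ->
  rest_size c <= L /\ forall s, s \in S -> rest_size c <> s.+1.
Proof.
move=> /rest_at_most_one [[_ ->] | [u uS [_ ->]]]; first by [].
split=> [|s sS [us]]; first exact: ltn_ord.
by move: uS; rewrite (val_inj us) sS.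
Qed.

Lemma complex_eq_rest (c d : complex L) :
  rest_count c <= 1 -> rest_count d <= 1 -> rest_size c = rest_size d ->
  {in S, c =1 d} -> c = d.
Proof.
move=> c1 d1 cd cdS; apply/ffunP => t.
have [/cdS //|tS] := boolP (t \in S).
by rewrite (rest_entry c1 tS) (rest_entry d1 tS) cd.
Qed.

End RestOfComplex.

Section OrderTwoCCRN.
Variables (L : nat) (Rx : finType) (N : Rx -> complex L * complex L).
Hypothesis HC : is_CCRN1_order2 N.

Lemma reaction_split (S : {set 'I_L}) (r : Rx) :
  [/\ \sum_(t in S) inp N r t + rest_count S (inp N r) <= 2,
      \sum_(t in S) outp N r t + rest_count S (outp N r) <= 2 &
      \sum_(t in S) t.+1 * inp N r t + rest_size S (inp N r) =
      \sum_(t in S) t.+1 * outp N r t + rest_size S (outp N r)].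
Proof. by case: HC => _ /(_ r) []; rewrite !(sum_in_rest S). Qed.

(* No cluster occurs on both sides of a reaction: otherwise both sides carry
   the same number of copies of it and one further cluster of equal size at
   most, so the two complexes would coincide. *)
Lemma reactant_not_product (r : Rx) (s : 'I_L) : inp N r s = 0 \/ outp N r s = 0.
Proof.
have [|i_pos] := posnP (inp N r s); [by left | right].
have [//|o_pos] := posnP (outp N r s); exfalso.
have [cnt_i cnt_o balance] := reaction_split [set s] r.
rewrite !big_set1 in cnt_i cnt_o balance.
have [ri ro] : rest_count [set s] (inp N r) <= 1 /\ rest_count [set s] (outp N r) <= 1.
  by lia.
have [_ /(_ s (set11 s)) ni] := rest_size_spec ri.
have [_ /(_ s (set11 s)) no] := rest_size_spec ro.
have zi := @rest_size_count0 _ [set s] (inp N r).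
have zo := @rest_size_count0 _ [set s] (outp N r).
have [e_s e_rest] : inp N r s = outp N r s /\
    rest_size [set s] (inp N r) = rest_size [set s] (outp N r).
  have ei : inp N r s = 1 \/ inp N r s = 2 by lia.
  have eo : outp N r s = 1 \/ outp N r s = 2 by lia.
  by case: ei => ei; case: eo => eo; rewrite ei eo in balance cnt_i cnt_o *; lia.
have neq : inp N r <> outp N r by case: HC => [[_ /(_ r) /eqP]].
by apply: neq; apply: complex_eq_rest ri ro e_rest _ => t; rewrite in_set1 => /eqP ->.
Qed.

(* What a reaction can do to two distinct species: neither occurs on both
   sides, each side has at most two of them, and [2 s1 -> 2 s2] (or the
   converse) is impossible since it would not conserve size. *)
Lemma pair_reaction_bounds (r : Rx) (s1 s2 : 'I_L) : s1 != s2 ->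
  [/\ inp N r s1 = 0 \/ outp N r s1 = 0, inp N r s2 = 0 \/ outp N r s2 = 0,
      inp N r s1 + inp N r s2 <= 2 /\ outp N r s1 + outp N r s2 <= 2,
      ~ (inp N r s1 = 2 /\ outp N r s2 = 2) & ~ (inp N r s2 = 2 /\ outp N r s1 = 2)].
Proof.
move=> s12.
have no_swap u w : u != w -> inp N r u = 2 -> outp N r w = 2 -> False.
  move=> uw i_u o_w; have [cnt_i cnt_o balance] := reaction_split [set u; w] r.
  rewrite !big_set2 //= i_u o_w in cnt_i cnt_o balance.
  have [i_w o_u] : inp N r w = 0 /\ outp N r u = 0 by lia.
  have zi : rest_size [set u; w] (inp N r) = 0 by apply: rest_size_count0; lia.
  have zo : rest_size [set u; w] (outp N r) = 0 by apply: rest_size_count0; lia.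
  rewrite i_w o_u zi zo in balance.
  have /val_inj uw_eq : (u : nat) = w by lia.
  by rewrite uw_eq eqxx in uw.
have [cnt_i cnt_o _] := reaction_split [set s1; s2] r.
rewrite !big_set2 //= in cnt_i cnt_o.
split; do ?exact: reactant_not_product; first by lia.
- by case; apply: no_swap.
- by case; apply: no_swap; rewrite eq_sym.
Qed.

Definition transfers (r : Rx) (t s : 'I_L) (j : nat) : Prop :=
  [/\ inp N r t = 1, inp N r s = 0, outp N r s = j & outp N r t = 0].

Lemma transfers_of_pattern (r : Rx) (s t : 'I_L) : s != t ->
  0 < outp N r s -> inp N r t = 1 ->
  transfers r t s (outp N r s) /\ (outp N r s = 1 \/ outp N r s = 2).
Proof.
move=> st o_s i_t; have [n_s n_t [cnt_i cnt_o] _ _] := pair_reaction_bounds r st.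
by split; [split|]; lia.
Qed.

Lemma transfer_rest (r : Rx) (t s : 'I_L) (j : nat) :
  s != t -> transfers r t s j -> j = 1 \/ j = 2 ->
  [/\ rest_count [set s; t] (inp N r) <= 1, rest_count [set s; t] (outp N r) <= 1,
      t.+1 + rest_size [set s; t] (inp N r) = j * s.+1 + rest_size [set s; t] (outp N r),
      j = 2 -> rest_size [set s; t] (outp N r) = 0 &
      rest_size [set s; t] (inp N r) = rest_size [set s; t] (outp N r) ->
      rest_size [set s; t] (inp N r) = 0].
Proof.
move=> st [i_t i_s o_s o_t] hj.
have [cnt_i cnt_o balance] := reaction_split [set s; t] r.
rewrite !big_set2 //= i_t i_s o_s o_t in cnt_i cnt_o balance.
have ri : rest_count [set s; t] (inp N r) <= 1 by lia.
have ro : rest_count [set s; t] (outp N r) <= 1 by lia.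
split=> // [|j2|same]; first by lia.
- by apply: rest_size_count0; lia.
- have [[_ ->] // | [u uS [iE sizeE]]] := rest_at_most_one ri.
  have i_u : inp N r u = 1 by rewrite iE // eqxx.
  have o_u : outp N r u = 1 by rewrite (rest_entry ro uS) -same sizeE eqxx.
  by have := reactant_not_product r u; lia.
Qed.

Lemma transfers_eq (r r' : Rx) (t s : 'I_L) (j : nat) :
  s != t -> j = 1 \/ j = 2 -> transfers r t s j -> transfers r' t s j ->
  rest_size [set s; t] (inp N r) = rest_size [set s; t] (inp N r') ->
  rest_size [set s; t] (outp N r) = rest_size [set s; t] (outp N r') -> r = r'.
Proof.
move=> st hj Tr Tr' e_in e_out.
have [ri ro _ _ _] := transfer_rest st Tr hj.
have [ri' ro' _ _ _] := transfer_rest st Tr' hj.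
have agree (c c' : complex L) : c s = c' s -> c t = c' t -> {in [set s; t], c =1 c'}.
  by move=> es et u; rewrite in_set2 => /orP[] /eqP ->.
case: Tr Tr' => [i_t i_s o_s o_t] [i_t' i_s' o_s' o_t'].
have e_inp : inp N r = inp N r'.
  by apply: complex_eq_rest ri ri' e_in _; apply: agree; rewrite ?i_s ?i_s' ?i_t ?i_t'.
have e_outp : outp N r = outp N r'.
  by apply: complex_eq_rest ro ro' e_out _; apply: agree; rewrite ?o_s ?o_s' ?o_t ?o_t'.
case: HC => [[injN _] _]; apply: injN.
by rewrite [N r]surjective_pairing [N r']surjective_pairing; congr pair.
Qed.

Lemma consumed_iff (RX : {set Rx}) (u : 'I_L) :
  (exists2 r, r \in RX & 0 < inp N r u) <-> u \in food_set N RX :|: member_set N RX.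
Proof.
rewrite !inE; split.
- move=> [r rR i_u].
  have o_u : outp N r u = 0 by have := reactant_not_product r u; lia.
  have -> /= : [exists r in RX, (0 < inp N r u) || (0 < outp N r u)].
    by apply/exists_inP; exists r => //; rewrite i_u.
  have [//|/forall_inPn [r' r'R pos]] := boolP [forall r in RX, stoich N u r <= 0]%R.
  apply/orP; right; apply/andP; split; apply/exists_inP.
  + by exists r' => //; rewrite ltNge.
  + by exists r => //; rewrite /stoich o_u; lia.
- case/orP => [/andP[/exists_inP [r rR in_or_out] /forall_inP nonpos] | member].
  + exists r => //; move: in_or_out (nonpos r rR); rewrite /stoich.
    by have := reactant_not_product r u; lia.
  + case/andP: member => _ /andP[_ /exists_inP [r rR neg]].
    by exists r => //; move: neg; rewrite /stoich; lia.
Qed.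

Lemma produced_iff (RX : {set Rx}) (u : 'I_L) :
  (exists2 r, r \in RX & 0 < outp N r u) <-> u \in waste_set N RX :|: member_set N RX.
Proof.
rewrite !inE; split.
- move=> [r rR o_u].
  have i_u : inp N r u = 0 by have := reactant_not_product r u; lia.
  have -> /= : [exists r in RX, (0 < inp N r u) || (0 < outp N r u)].
    by apply/exists_inP; exists r => //; rewrite o_u orbT.
  have [//|/forall_inPn [r' r'R neg]] := boolP [forall r in RX, 0 <= stoich N u r]%R.
  apply/orP; right; apply/andP; split; apply/exists_inP.
  + by exists r => //; rewrite /stoich i_u; lia.
  + by exists r' => //; rewrite ltNge.
- case/orP => [/andP[/exists_inP [r rR in_or_out] /forall_inP nonneg] | member].
  + exists r => //; move: in_or_out (nonneg r rR); rewrite /stoich.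
    by have := reactant_not_product r u; lia.
  + case/andP: member => _ /andP[/exists_inP [r rR pos] _].
    by exists r => //; move: pos; rewrite /stoich; lia.
Qed.

Lemma same_FWMC_exchange (RA RB : {set Rx}) (AC BC : {set 'I_L}) :
  FWMC N RB BC = FWMC N RA AC -> forall u, u \notin AC ->
  ((exists2 r, r \in RB & 0 < inp N r u) <-> (exists2 r, r \in RA & 0 < inp N r u)) /\
  ((exists2 r, r \in RB & 0 < outp N r u) <-> (exists2 r, r \in RA & 0 < outp N r u)).
Proof.
case=> e_food e_waste e_member e_core u uA.
have e_mem_u : (u \in member_set N RB) = (u \in member_set N RA).
  by move/setP: e_member => /(_ u); rewrite !in_setD e_core (negbTE uA).
by rewrite !consumed_iff !produced_iff !in_setU e_food e_waste e_mem_u.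
Qed.

Definition amplifying (j1 j2 : nat) : Prop :=
  [/\ j1 = 1 \/ j1 = 2, j2 = 1 \/ j2 = 2 & 2 < j1 + j2].

Definition transfer_cycle (p q : Rx) (s1 s2 : 'I_L) (j1 j2 : nat) : Prop :=
  [/\ transfers p s2 s1 j1, transfers q s1 s2 j2 & amplifying j1 j2].

Lemma cycle_rest_counts (p q : Rx) (s1 s2 : 'I_L) (j1 j2 : nat) :
  s1 != s2 -> transfer_cycle p q s1 s2 j1 j2 -> forall r, r \in [set p; q] ->
  rest_count [set s1; s2] (inp N r) <= 1 /\ rest_count [set s1; s2] (outp N r) <= 1.
Proof.
move=> s12 [Tp Tq [hj1 hj2 _]] r; rewrite in_set2 => /orP[] /eqP ->.
- by have [] := transfer_rest s12 Tp hj1.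
- have s21 : s2 != s1 by rewrite eq_sym.
  by rewrite setUC; have [] := transfer_rest s21 Tq hj2.
Qed.

End OrderTwoCCRN.

Section Cores.
Variables (R : realType) (L : nat) (Rx : finType) (N : Rx -> complex L * complex L).
Local Open Scope ring_scope.

Lemma flux_pair_contra (RX : {set Rx}) (v : Rx -> R) (s1 s2 : 'I_L) (k1 k2 : int) :
  (forall r, r \in RX -> 0 < v r) ->
  0 < \sum_(r in RX) (stoich N s1 r)%:~R * v r ->
  0 < \sum_(r in RX) (stoich N s2 r)%:~R * v r ->
  0 < k1 -> 0 < k2 ->
  (forall r, r \in RX -> k1 * stoich N s1 r + k2 * stoich N s2 r <= 0) -> False.
Proof.
move=> v_pos flux1 flux2 k1_pos k2_pos comb.
have : \sum_(r in RX) (k1 * stoich N s1 r + k2 * stoich N s2 r)%:~R * v r <= 0.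
  apply: sumr_le0 => r rR; apply: mulr_le0_ge0; first by rewrite lerz0 comb.
  exact: ltW (v_pos r rR).
rewrite (eq_bigr (fun r => k1%:~R * ((stoich N s1 r)%:~R * v r) +
                         k2%:~R * ((stoich N s2 r)%:~R * v r))); last first.
  by move=> r _; rewrite intrD !intrM mulrDl !mulrA.
rewrite big_split /= -!mulr_sumr leNgt => /negP; apply.
by apply: addr_gt0; apply: mulr_gt0; rewrite ?ltr0z.
Qed.

Lemma core_minimal (AC M : {set 'I_L}) (RA R' : {set Rx}) :
  autocatalytic_core N R AC RA -> M \subset AC -> R' \subset RA ->
  excl_autocatalytic N R M R' -> M = AC /\ R' = RA.
Proof.
move=> [_ minimal] sub_M sub_R excl.
have [[-> ->] // | ne] := eqVneq (M, R') (AC, RA).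
by case: (minimal _ _ sub_M sub_R ne).
Qed.

(* A transfer cycle is exclusively autocatalytic, with flux [j2 + 1] on [p]
   and [j1 + 1] on [q]: both rows then equal [j1 * j2 - 1 > 0]. *)
Lemma cycle_autocatalytic (p q : Rx) (s1 s2 : 'I_L) (j1 j2 : nat) :
  s1 != s2 -> transfer_cycle N p q s1 s2 j1 j2 ->
  excl_autocatalytic N R [set s1; s2] [set p; q].
Proof.
move=> s12 [[p_in2 p_in1 p_out1 p_out2] [q_in1 q_in2 q_out2 q_out1] [hj1 hj2 hj]].
have pq : p != q by apply/eqP => epq; rewrite epq q_out1 in p_out1; lia.
pose v r : R := ((if r == p then j2.+1 else j1.+1)%:Z)%:~R.
split.
- by apply/set0Pn; exists s1; rewrite set21.
- exists v; split=> [r _ | s]; first by rewrite /v ltr0z; case: eqP.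
  rewrite big_set2 //= /v eqxx eq_sym (negbTE pq).
  rewrite -!intrM -intrD ltr0z /stoich.
  rewrite in_set2 => /orP[] /eqP ->;
    rewrite ?p_in1 ?p_in2 ?p_out1 ?p_out2 ?q_in1 ?q_in2 ?q_out1 ?q_out2;
    by case: hj1 => e1; case: hj2 => e2; rewrite e1 e2 in hj *; lia.
- move=> s; rewrite in_set2 => /orP[] /eqP ->.
  + by exists q; rewrite ?set22 ?q_in1.
  + by exists p; rewrite ?set21 ?p_in2.
- move=> r; rewrite in_set2 => /orP[] /eqP ->.
  + by exists s2; rewrite ?set22 ?p_in2.
  + by exists s1; rewrite ?set21 ?q_in1.
Qed.

End Cores.

Section CoresOfOrderTwo.
Variables (R : realType) (L : nat) (Rx : finType) (N : Rx -> complex L * complex L).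
Hypothesis HC : is_CCRN1_order2 N.

(* A core with two reactions has two species: each reaction consumes a core
   species; one species consumed by both reactions could not have positive
   flux, and two distinct ones already form an autocatalytic motif. *)
Lemma two_reaction_core_species (AC : {set 'I_L}) (RA : {set Rx}) :
  autocatalytic_core N R AC RA -> #|RA| = 2 ->
  exists s1 s2, s1 != s2 /\ AC = [set s1; s2].
Proof.
move=> core /eqP/cards2P [r1 [r2 [r12 ERA]]].
have [[_ [v [v_pos flux]] consumed consumes] _] := core.
have [s1 s1A i1] : exists2 s, s \in AC & (0 < inp N r1 s)%N.
  by apply: consumes; rewrite ERA set21.
have [s2 s2A i2] : exists2 s, s \in AC & (0 < inp N r2 s)%N.
  by apply: consumes; rewrite ERA set22.
have [es | s12] := eqVneq s1 s2.
- exfalso; subst s2.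
  apply: (flux_pair_contra v_pos (flux s1 s1A) (flux s1 s1A)
           (k1 := 1%R) (k2 := 1%R)) => // r.
  rewrite ERA in_set2 => /orP[] /eqP -> ; rewrite /stoich.
  + by have := reactant_not_product HC r1 s1; lia.
  + by have := reactant_not_product HC r2 s1; lia.
- exists s1, s2; split=> //.
  have sub : [set s1; s2] \subset AC.
    by apply/subsetP => s; rewrite in_set2 => /orP[] /eqP ->.
  suff excl : excl_autocatalytic N R [set s1; s2] RA.
    by have [-> _] := core_minimal core sub (subxx RA) excl.
  split.
  + by apply/set0Pn; exists s1; rewrite set21.
  + by exists v; split=> // s /(subsetP sub) /flux.
  + by move=> s /(subsetP sub) /consumed.
  + move=> r; rewrite ERA in_set2 => /orP[] /eqP ->.
    * by exists s1; rewrite ?set21.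
    * by exists s2; rewrite ?set22.
Qed.

(* Each of the three required
   reaction patterns exists, since otherwise the weighted row sum
   [2 S_s1 + S_s2], [S_s1 + 2 S_s2], resp. [S_s1 + S_s2] is nonpositive on
   every reaction; minimality then rules out further reactions. *)
Lemma two_species_core_shape (s1 s2 : 'I_L) (RX : {set Rx}) :
  s1 != s2 -> autocatalytic_core N R [set s1; s2] RX ->
  exists p q j1 j2, RX = [set p; q] /\ transfer_cycle N p q s1 s2 j1 j2.
Proof.
move=> s12 core; have [[_ [v [v_pos flux]] _ consumes] _] := core.
have s21 : s2 != s1 by rewrite eq_sym.
have flux1 := flux s1 (set21 s1 s2); have flux2 := flux s2 (set22 s1 s2).
have consumes_core r : r \in RX -> 0 < inp N r s1 \/ 0 < inp N r s2.
  by move=> /consumes [s]; rewrite in_set2 => /orP[] /eqP ->; [left | right].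
have exP : exists2 p, p \in RX & (0 < outp N p s1) && (inp N p s2 == 1).
  apply/exists_inP; apply: contraT => /exists_inPn noP; exfalso.
  apply: (flux_pair_contra v_pos flux1 flux2 (k1 := 2%R) (k2 := 1%R)) => // r rR.
  have := consumes_core r rR.
  have [n1 n2 [c1 c2] sw1 sw2] := pair_reaction_bounds HC r s12.
  by move: (noP r rR); rewrite /stoich; lia.
have exQ : exists2 q, q \in RX & (0 < outp N q s2) && (inp N q s1 == 1).
  apply/exists_inP; apply: contraT => /exists_inPn noQ; exfalso.
  apply: (flux_pair_contra v_pos flux1 flux2 (k1 := 1%R) (k2 := 2%R)) => // r rR.
  have := consumes_core r rR.
  have [n1 n2 [c1 c2] sw1 sw2] := pair_reaction_bounds HC r s12.
  by move: (noQ r rR); rewrite /stoich; lia.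
have exD : exists2 r, r \in RX & ((outp N r s1 == 2) && (inp N r s2 == 1)) ||
                                 ((outp N r s2 == 2) && (inp N r s1 == 1)).
  apply/exists_inP; apply: contraT => /exists_inPn noD; exfalso.
  apply: (flux_pair_contra v_pos flux1 flux2 (k1 := 1%R) (k2 := 1%R)) => // r rR.
  have := consumes_core r rR.
  have [n1 n2 [c1 c2] sw1 sw2] := pair_reaction_bounds HC r s12.
  by move: (noD r rR); rewrite /stoich; lia.
have [p [q [pR qR /andP[o_p /eqP i_p] /andP[o_q /eqP i_q] double]]] :
    exists p q, [/\ p \in RX, q \in RX, (0 < outp N p s1) && (inp N p s2 == 1),
                    (0 < outp N q s2) && (inp N q s1 == 1) &
                    (outp N p s1 == 2) || (outp N q s2 == 2)].
  have [r rR /orP[/andP[o_r i_r] | /andP[o_r i_r]]] := exD.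
  - by have [q qR Pq] := exQ; exists r, q; rewrite o_r i_r (eqP o_r).
  - by have [p pR Pp] := exP; exists p, r; rewrite o_r i_r (eqP o_r) orbT.
have [Tp hj1] := transfers_of_pattern HC s12 o_p i_p.
have [Tq hj2] := transfers_of_pattern HC s21 o_q i_q.
have cycle : transfer_cycle N p q s1 s2 (outp N p s1) (outp N q s2).
  by split=> //; split=> //; lia.
exists p, q, (outp N p s1), (outp N q s2); split=> //.
have sub : [set p; q] \subset RX by apply/subsetP => r; rewrite in_set2 => /orP[] /eqP ->.
by have [_ ->] := core_minimal core (subxx _) sub (cycle_autocatalytic R s12 cycle).
Qed.

End CoresOfOrderTwo.

Definition same_positive (x y x' y' : nat) : Prop :=
  forall t, 0 < t -> (t = x \/ t = y) <-> (t = x' \/ t = y').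

Lemma same_positive_sym (x y x' y' : nat) :
  same_positive x y x' y' -> same_positive x' y' x y.
Proof. by move=> same t t_pos; split=> /(same t t_pos). Qed.

Lemma same_positive_commr (x y x' y' : nat) :
  same_positive x y x' y' -> same_positive x y y' x'.
Proof. by move=> same t t_pos; rewrite [_ \/ t = x']or_comm; exact: same. Qed.

Lemma same_positive_swap (x y x' y' : nat) :
  same_positive x y x' y' -> same_positive y x y' x'.
Proof. by move=> same t t_pos; rewrite or_comm [_ \/ t = x']or_comm; exact: same. Qed.

Lemma same_positive_zero (x y : nat) : same_positive 0 x 0 y -> x = y.
Proof.
move=> same; have [x0|x_pos] := posnP x.
- have [y0|y_pos] := posnP y; first by lia.
  by case: (proj2 (same y y_pos) (or_intror erefl)); lia.
- by case: (proj1 (same x x_pos) (or_intror erefl)); lia.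
Qed.

Lemma same_positive_mem (x y x' y' : nat) : same_positive x y x' y' ->
  [/\ 0 < x -> x = x' \/ x = y', 0 < y -> y = x' \/ y = y',
      0 < x' -> x' = x \/ x' = y & 0 < y' -> y' = x \/ y' = y].
Proof.
move=> same; split=> pos; apply/(same _ pos); by [left | right].
Qed.

(* Arithmetic shadow of a transfer cycle on core sizes [a], [b]: the sizes of
   the non-core reactant/product of [p] ([Xp], [Yp]) and of [q] ([Xq], [Yq]),
   with 0 for "none". *)
Record size_profile (a b j1 j2 Xp Yp Xq Yq : nat) : Prop := SizeProfile {
  profile_amplifying : amplifying j1 j2;
  balance_p : b + Xp = j1 * a + Yp;
  balance_q : a + Xq = j2 * b + Yq;
  full_p : j1 = 2 -> Yp = 0;
  full_q : j2 = 2 -> Yq = 0;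
  disjoint_p : Xp = Yp -> Xp = 0;
  disjoint_q : Xq = Yq -> Xq = 0
}.

Lemma size_profile_swap (a b j1 j2 Xp Yp Xq Yq : nat) :
  size_profile a b j1 j2 Xp Yp Xq Yq -> size_profile b a j2 j1 Xq Yq Xp Yp.
Proof. by case=> [[hj1 hj2 hj]] *; split=> //; split=> //; lia. Qed.

Lemma profile_first_doubles (a b j1 j2 Xp Yp Xq Yq j1' j2' Xp' Yp' Xq' Yq' : nat) :
  0 < a -> 0 < b -> a <> b ->
  size_profile a b j1 j2 Xp Yp Xq Yq -> size_profile a b j1' j2' Xp' Yp' Xq' Yq' ->
  same_positive Xp Xq Xp' Xq' -> same_positive Yp Yq Yp' Yq' ->
  j1 = 2 -> j1' = 2.
Proof.
move=> a_pos b_pos ab [[_ hj2 _] e_p e_q f_p f_q _ d_q].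
move=> [[hj1' hj2' hj'] e_p' e_q' _ f_q' d_p' _] sameX sameY j1_2.
case: hj1' => // j1'_1.
have j2'_2 : j2' = 2 by lia.
subst j1 j1' j2'; have Yp0 := f_p erefl; have Yq'0 := f_q' erefl.
have eY : Yq = Yp'.
  by apply: same_positive_zero; move: sameY => /same_positive_commr; rewrite Yp0 Yq'0.
have [X_p X_q X_p' _] := same_positive_mem sameX.
by case: hj2 => j2v; subst j2; lia.
Qed.

(* A size profile is determined by its sets of positive reactant and product
   sizes: by symmetry the multiplicities agree, then the product sizes (only
   one of which can be positive), then the reactant sizes by balance. *)
Lemma profile_unique (a b j1 j2 Xp Yp Xq Yq j1' j2' Xp' Yp' Xq' Yq' : nat) :
  0 < a -> 0 < b -> a <> b ->
  size_profile a b j1 j2 Xp Yp Xq Yq -> size_profile a b j1' j2' Xp' Yp' Xq' Yq' ->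
  same_positive Xp Xq Xp' Xq' -> same_positive Yp Yq Yp' Yq' ->
  [/\ j1 = j1', j2 = j2', Xp = Xp', Yp = Yp' & Xq = Xq' /\ Yq = Yq'].
Proof.
move=> a_pos b_pos ab P P' sameX sameY.
have ba : b <> a by lia.
have d1 := profile_first_doubles a_pos b_pos ab P P' sameX sameY.
have d1' := profile_first_doubles a_pos b_pos ab P' P
  (same_positive_sym sameX) (same_positive_sym sameY).
have d2 := profile_first_doubles b_pos a_pos ba (size_profile_swap P)
  (size_profile_swap P') (same_positive_swap sameX) (same_positive_swap sameY).
have d2' := profile_first_doubles b_pos a_pos ba (size_profile_swap P')
  (size_profile_swap P) (same_positive_swap (same_positive_sym sameX))
  (same_positive_swap (same_positive_sym sameY)).
case: P => [[hj1 hj2 hj] e_p e_q f_p f_q _ _].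
case: P' => [[hj1' hj2' _] e_p' e_q' f_p' f_q' _ _].
have [ej1 ej2] : j1 = j1' /\ j2 = j2'.
  by clear -hj1 hj2 hj1' hj2' d1 d1' d2 d2'; lia.
subst j1' j2'.
suff [eYp eYq] : Yp = Yp' /\ Yq = Yq'.
  have eXp : Xp = Xp' by clear -e_p e_p' eYp; lia.
  have eXq : Xq = Xq' by clear -e_q e_q' eYq; lia.
  by [].
case: hj1 => j1v.
- have j2v : j2 = 2 by clear -hj hj2 j1v; lia.
  rewrite (f_q j2v) (f_q' j2v); split=> //; apply: same_positive_zero.
  by move: sameY => /same_positive_swap; rewrite (f_q j2v) (f_q' j2v).
- rewrite (f_p j1v) (f_p' j1v); split=> //; apply: same_positive_zero.
  by move: sameY; rewrite (f_p j1v) (f_p' j1v).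
Qed.

Lemma cycle_profile (L : nat) (Rx : finType) (N : Rx -> complex L * complex L)
    (p q : Rx) (s1 s2 : 'I_L) (j1 j2 : nat) :
  is_CCRN1_order2 N -> s1 != s2 -> transfer_cycle N p q s1 s2 j1 j2 ->
  size_profile s1.+1 s2.+1 j1 j2
    (rest_size [set s1; s2] (inp N p)) (rest_size [set s1; s2] (outp N p))
    (rest_size [set s1; s2] (inp N q)) (rest_size [set s1; s2] (outp N q)).
Proof.
move=> HC s12 [Tp Tq amp]; have [hj1 hj2 _] := amp.
have s21 : s2 != s1 by rewrite eq_sym.
have [_ _ bal_p full_p disj_p] := transfer_rest HC s12 Tp hj1.
have [_ _ bal_q full_q disj_q] := transfer_rest HC s21 Tq hj2.
by rewrite setUC in bal_q full_q disj_q; split.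
Qed.

Lemma same_positive_rest (L : nat) (Rx : finType) (f : Rx -> complex L)
    (S : {set 'I_L}) (p q p' q' : Rx) :
  (forall r, r \in [set p; q] -> rest_count S (f r) <= 1) ->
  (forall r, r \in [set p'; q'] -> rest_count S (f r) <= 1) ->
  (forall u, u \notin S ->
     (exists2 r, r \in [set p; q] & 0 < f r u) <->
     (exists2 r, r \in [set p'; q'] & 0 < f r u)) ->
  same_positive (rest_size S (f p)) (rest_size S (f q))
                (rest_size S (f p')) (rest_size S (f q')).
Proof.
move=> small small' same t t_pos.
have [c_p c_q] := (small p (set21 p q), small q (set22 p q)).
have [c_p' c_q'] := (small' p' (set21 p' q'), small' q' (set22 p' q')).
have witness x y u :
    rest_count S (f x) <= 1 -> rest_count S (f y) <= 1 -> u \notin S ->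
    (u.+1 = rest_size S (f x) \/ u.+1 = rest_size S (f y)) <->
    (exists2 r, r \in [set x; y] & 0 < f r u).
  move=> c_x c_y uS; split.
  - case=> e.
    + by exists x; rewrite ?set21 // (rest_entry c_x uS) -e eqxx.
    + by exists y; rewrite ?set22 // (rest_entry c_y uS) -e eqxx.
  - case=> r; rewrite in_set2 => /orP[] /eqP ->.
    + by rewrite (rest_entry c_x uS); case: eqP => // ->; left.
    + by rewrite (rest_entry c_y uS); case: eqP => // ->; right.
have [t_le | t_gt] := leqP t L; last first.
  have := (rest_size_spec c_p).1; have := (rest_size_spec c_q).1.
  have := (rest_size_spec c_p').1; have := (rest_size_spec c_q').1.
  lia.
have u_lt : t.-1 < L by lia.
have -> : t = (Ordinal u_lt).+1 by rewrite /= prednK.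
have [uS | uS] := boolP (Ordinal u_lt \in S).
- have := (rest_size_spec c_p).2 _ uS; have := (rest_size_spec c_q).2 _ uS.
  have := (rest_size_spec c_p').2 _ uS; have := (rest_size_spec c_q').2 _ uS.
  lia.
- apply: (iff_trans (witness _ _ _ c_p c_q uS)); apply: (iff_trans (same _ uS)).
  exact: iff_sym (witness _ _ _ c_p' c_q' uS).
Qed.

Theorem mainTheorem12 (R : realType) (L : nat) (Rx : finType)
    (N : Rx -> complex L * complex L) (RA : {set Rx}) (AC : {set 'I_L}) :
  is_CCRN1_order2 N ->
  (forall RB : {set Rx}, is_MAS N R RB -> has_unique_core N R RB) ->
  autocatalytic_core N R AC RA ->
  #|RA| = 2 ->
  forall (RB : {set Rx}) (BC : {set 'I_L}),
    autocatalytic_core N R BC RB -> RB != RA ->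
    FWMC N RB BC != FWMC N RA AC.
Proof.
move=> HC _ coreA cardA RB BC coreB RB_RA; apply/negP => /eqP same.
have [s1 [s2 [s12 EAC]]] := two_reaction_core_species HC coreA cardA.
have exchange := same_FWMC_exchange HC same.
have EBC : BC = AC by case: same.
subst AC BC.
have [p [q [j1 [j2 [ERA cycA]]]]] := two_species_core_shape HC s12 coreA.
have [p' [q' [j1' [j2' [ERB cycB]]]]] := two_species_core_shape HC s12 coreB.
rewrite ERA ERB in exchange RB_RA.
have countsA := cycle_rest_counts HC s12 cycA.
have countsB := cycle_rest_counts HC s12 cycB.
have sameX := same_positive_rest (fun r rR => (countsA r rR).1)
  (fun r rR => (countsB r rR).1) (fun u uS => iff_sym (exchange u uS).1).
have sameY := same_positive_rest (fun r rR => (countsA r rR).2)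
  (fun r rR => (countsB r rR).2) (fun u uS => iff_sym (exchange u uS).2).
have sizes_neq : s1.+1 <> s2.+1 by move=> [/val_inj e12]; rewrite e12 eqxx in s12.
have [ej1 ej2 eXp eYp [eXq eYq]] := profile_unique (ltn0Sn _) (ltn0Sn _) sizes_neq
  (cycle_profile HC s12 cycA) (cycle_profile HC s12 cycB) sameX sameY.
subst j1' j2'; case: cycA cycB => [Tp Tq [hj1 hj2 _]] [Tp' Tq' _].
have ep : p = p' := transfers_eq HC s12 hj1 Tp Tp' eXp eYp.
have s21 : s2 != s1 by rewrite eq_sym.
have eq : q = q' by apply: (transfers_eq HC s21 hj2 Tq Tq'); rewrite setUC.
by rewrite ep eq eqxx in RB_RA.
Qed.
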